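(* Let $\mathcal{B}=(T,\bowtie)$ be a block and let $(B_1,\dots,B_k)$ be a legal partition of $T$. Then $\mathrm{LevelSchedule}(B_1,\dots,B_k)$ returns a valid schedule of $\mathcal{B}$.
   Context: A block consists of a finite set $T$ of transactions with a symmetric irreflexive conflict relation $\bowtie$ on $T$. A set $A\subseteq T$ is conflict-free if no two elements of $A$ conflict. A legal partition of $T$ is an ordered sequence $(B_1,\dots,B_k)$ of pairwise disjoint conflict-free sets whose union is $T$. A schedule is a set $\mathcal S\subseteq T\times T$ such that the directed graph $(T,\mathcal S)$ is acyclic; it is valid if for every pair $tx\bowtie tx'$ the graph $(T,\mathcal S)$ contains a directed path from $tx$ to $tx'$ or from $tx'$ to $tx$. $\mathrm{LevelSchedule}(B_1,\dots,B_k)$ is computed as follows: set $B_0=\emptyset$ and $\mathcal S=\emptyset$; for $i=1,\dots,k$ (increasing) and, for each such $i$, for $j=i-1,i-2,\dots,0$ (decreasing): let $E=\{(u,v)\in B_j\times B_i : u\bowtie v\}$, let $P$ be the set of pairs $(x,y)$ such that the current directed graph $(T,\mathcal S)$ contains a directed path from $x$ to $y$, and replace $\mathcal S$ by $\mathcal S\cup(E\setminus P)$. The output is the final $\mathcal S$. *)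

From mathcomp Require Import all_boot.
Set Implicit Arguments. Unset Strict Implicit. Unset Printing Implicit Defensive.

(* A block: a finite type T of transactions with a conflict relation [cf]. *)
Definition is_conflict_rel (T : finType) (cf : rel T) : Prop :=
  symmetric cf /\ irreflexive cf.

Definition conflict_free (T : finType) (cf : rel T) (A : {set T}) : bool :=
  [forall x in A, forall y in A, ~~ cf x y].

Definition legal_partition (T : finType) (cf : rel T) (Bs : seq {set T}) : Prop :=
  (forall i j, (i < size Bs)%N -> (j < size Bs)%N -> i <> j ->
     [disjoint nth set0 Bs i & nth set0 Bs j]) /\
  (forall B, B \in Bs -> conflict_free cf B) /\
  \bigcup_(B <- Bs) B = [set: T].

Definition edge_rel (T : finType) (S : {set T * T}) : rel T :=
  fun x y => (x, y) \in S.

Definition reach (T : finType) (S : {set T * T}) (x y : T) : bool :=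
  [exists z, edge_rel S x z && connect (edge_rel S) z y].

Definition acyclic (T : finType) (S : {set T * T}) : Prop :=
  forall x, ~~ reach S x x.

Definition schedule (T : finType) (S : {set T * T}) : Prop := acyclic S.

Definition valid_schedule (T : finType) (cf : rel T) (S : {set T * T}) : Prop :=
  schedule S /\ forall x y, cf x y -> reach S x y || reach S y x.

(* B_i with the convention B_0 = set0 and B_i = i-th block (1-based). *)
Definition blk (T : finType) (Bs : seq {set T}) (i : nat) : {set T} :=
  if i is i'.+1 then nth set0 Bs i' else set0.

Definition level_step (T : finType) (cf : rel T) (Bs : seq {set T})
    (i j : nat) (S : {set T * T}) : {set T * T} :=
  S :|: [set p : T * T | [&& p.1 \in blk Bs j, p.2 \in blk Bs i, cf p.1 p.2
                            & ~~ reach S p.1 p.2]].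

(* Inner loop for j = i-1, i-2, ..., 0 (decreasing). *)
Fixpoint inner_loop (T : finType) (cf : rel T) (Bs : seq {set T})
    (i n : nat) (S : {set T * T}) : {set T * T} :=
  match n with
  | 0 => S
  | n'.+1 => inner_loop cf Bs i n' (level_step cf Bs i n' S)
  end.

Definition level_schedule (T : finType) (cf : rel T) (Bs : seq {set T})
    : {set T * T} :=
  foldl (fun S i => inner_loop cf Bs i i S) set0 (iota 1 (size Bs)).

From mathcomp Require Import all_boot.
Set Implicit Arguments. Unset Strict Implicit. Unset Printing Implicit Defensive.

(* Let the level of a transaction be the (1-based) index of its block. Every
   edge LevelSchedule adds goes from B_j to B_i with j < i, so it strictly
   increases the level; hence so does every path, and the schedule is acyclic.
   Conversely, two conflicting transactions lie in different blocks B_j, B_i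
   with j < i, say. When the loops reach (i, j) the edge between them is added
   unless a path already joins them, and paths are never destroyed later. *)

Section Reachability.
Variable T : finType.
Implicit Types S : {set T * T}.

Lemma reach_subset S S' x y : S \subset S' -> reach S x y -> reach S' x y.
Proof.
move=> sSS' /existsP [z /andP [Sxz Szy]]; apply/existsP; exists z.
rewrite /edge_rel (subsetP sSS' _ Sxz) /=.
by apply: connect_sub Szy => u v Suv; apply/connect1/(subsetP sSS').
Qed.

Definition rank_increasing (f : T -> nat) S := {in S, forall p, f p.1 < f p.2}.

Lemma reach_rank f S x y : rank_increasing f S -> reach S x y -> f x < f y.
Proof.
move=> fS /existsP [z /andP [Sxz /connectP [p Sp ->]]].
apply: leq_trans (fS _ Sxz) _ => /=.
elim: p z Sp {Sxz} => [|a p IHp] z //= /andP [Sza Sp].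
exact: leq_trans (ltnW (fS _ Sza)) (IHp _ Sp).
Qed.

Lemma acyclic_rank f S : rank_increasing f S -> acyclic S.
Proof. by move=> fS x; apply/negP => /(reach_rank fS); rewrite ltnn. Qed.

End Reachability.

Section LevelSchedule.
Variables (T : finType) (cf : rel T) (Bs : seq {set T}).
Implicit Types S : {set T * T}.

Lemma blk_bounds i x : x \in blk Bs i -> 0 < i <= size Bs.
Proof.
case: i => [|i] /=; first by rewrite inE.
move=> xBi; rewrite ltnNge; apply: contraL xBi => /(nth_default set0) ->.
by rewrite inE.
Qed.

Lemma conflict_free_blk i :
  (forall B, B \in Bs -> conflict_free cf B) -> conflict_free cf (blk Bs i).
Proof.
move=> cfreeBs; case: i => [|i] /=.
  by apply/forall_inP => x; rewrite inE.
have [lt_i | le_i] := ltnP i (size Bs); first exact/cfreeBs/mem_nth.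
by rewrite nth_default //; apply/forall_inP => x; rewrite inE.
Qed.

Definition level (x : T) := (find (fun B : {set T} => x \in B) Bs).+1.

Lemma blk_level x : x \in \bigcup_(B <- Bs) B -> x \in blk Bs (level x).
Proof.
rewrite bigcup_seq => /bigcupP [B BsB xB].
by apply: (nth_find _ (a := fun B : {set T} => x \in B)); apply/hasP; exists B.
Qed.

Definition outer_loop S (s : seq nat) :=
  foldl (fun S i => inner_loop cf Bs i i S) S s.

Lemma inner_loop_subset i n S : S \subset inner_loop cf Bs i n S.
Proof.
elim: n S => [|n IHn] S /=; first exact: subxx.
exact: subset_trans (subsetUl _ _) (IHn _).
Qed.

Lemma outer_loop_subset S s : S \subset outer_loop S s.
Proof.
elim: s S => [|i s IHs] S /=; first exact: subxx.
exact: subset_trans (inner_loop_subset _ _ _) (IHs _).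
Qed.

Lemma level_step_reach i j S x y :
  x \in blk Bs j -> y \in blk Bs i -> cf x y -> reach (level_step cf Bs i j S) x y.
Proof.
move=> xBj yBi cfxy; have [Sxy | nSxy] := boolP (reach S x y).
  exact: reach_subset (subsetUl _ _) Sxy.
apply/existsP; exists y; rewrite connect0 andbT /edge_rel.
by rewrite !inE /= xBj yBi cfxy nSxy orbT.
Qed.

Lemma inner_loop_reach i n j S x y : j < n ->
  x \in blk Bs j -> y \in blk Bs i -> cf x y -> reach (inner_loop cf Bs i n S) x y.
Proof.
elim: n S => [//|n IHn] S /=; rewrite ltnS leq_eqVlt => /predU1P [-> | lt_jn];
  last exact: IHn.
by move=> xBn yBi cfxy; apply: reach_subset (inner_loop_subset _ _ _) _;
  apply: level_step_reach.
Qed.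

Lemma outer_loop_reach i j S s x y : i \in s -> j < i ->
  x \in blk Bs j -> y \in blk Bs i -> cf x y -> reach (outer_loop S s) x y.
Proof.
elim: s S => [//|k s IHs] S /=; rewrite inE => /predU1P [<- | si]; last exact: IHs.
move=> lt_ji xBj yBi cfxy; apply: reach_subset (outer_loop_subset _ _) _.
exact: inner_loop_reach lt_ji xBj yBi cfxy.
Qed.

Lemma level_schedule_reach i j x y : j < i ->
  x \in blk Bs j -> y \in blk Bs i -> cf x y -> reach (level_schedule cf Bs) x y.
Proof.
move=> lt_ji xBj yBi; apply: (@outer_loop_reach i j set0 _ _ _ _ lt_ji xBj yBi).
by rewrite mem_iota add1n ltnS; apply: blk_bounds yBi.
Qed.

Hypothesis disjBs : forall i j, i < size Bs -> j < size Bs -> i <> j ->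
  [disjoint nth set0 Bs i & nth set0 Bs j].

Lemma level_blk i x : x \in blk Bs i -> level x = i.
Proof.
move=> xBi; have /andP [i_gt0 i_le] := blk_bounds xBi.
case: i i_gt0 i_le xBi => [//|i] _ /= i_lt xBi; congr _.+1.
have hasx : has (fun B : {set T} => x \in B) Bs by apply/(has_nthP set0); exists i.
have := nth_find set0 hasx; move: hasx; rewrite has_find.
set k := find _ Bs => k_lt xBk.
have [lt_ki | lt_ik | //] := ltngtP k i.
- have /disjointFr/(_ xBk) := disjBs k_lt i_lt (elimF eqP (ltn_eqF lt_ki)).
  by rewrite xBi.
- by have := before_find set0 lt_ik; rewrite xBi.
Qed.

Lemma level_step_rank i j S : j < i ->
  rank_increasing level S -> rank_increasing level (level_step cf Bs i j S).
Proof.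
move=> lt_ji rankS p; rewrite !inE => /orP [/rankS // | /and4P [p1Bj p2Bi _ _]].
by rewrite (level_blk p1Bj) (level_blk p2Bi).
Qed.

Lemma inner_loop_rank i n S : n <= i ->
  rank_increasing level S -> rank_increasing level (inner_loop cf Bs i n S).
Proof.
elim: n S => [//|n IHn] S /= lt_ni rankS.
exact/(IHn _ (ltnW lt_ni))/level_step_rank.
Qed.

Lemma outer_loop_rank S s :
  rank_increasing level S -> rank_increasing level (outer_loop S s).
Proof. by elim: s S => [|i s IHs] S //= rankS; apply/IHs/inner_loop_rank. Qed.

Lemma level_schedule_rank : rank_increasing level (level_schedule cf Bs).
Proof. by apply: outer_loop_rank => p; rewrite inE. Qed.

End LevelSchedule.

Theorem lemma1 (T : finType) (cf : rel T) (Bs : seq {set T}) :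
  is_conflict_rel cf -> legal_partition cf Bs ->
  valid_schedule cf (level_schedule cf Bs).
Proof.
move=> [cf_sym _] [disjBs [cfreeBs coverBs]].
split; first exact: (acyclic_rank (level_schedule_rank (cf := cf) disjBs)).
have blk_lvl x : x \in blk Bs (level Bs x) by apply: blk_level; rewrite coverBs inE.
move=> x y cfxy; have [lt_xy | lt_yx | eq_xy] := ltngtP (level Bs x) (level Bs y).
- by rewrite (level_schedule_reach lt_xy (blk_lvl x) (blk_lvl y) cfxy).
- by rewrite (level_schedule_reach lt_yx (blk_lvl y) (blk_lvl x)) ?orbT // cf_sym.
- have /forall_inP/(_ x (blk_lvl x))/forall_inP := conflict_free_blk (level Bs x) cfreeBs.
  by move=> /(_ y); rewrite eq_xy blk_lvl cfxy => /(_ isT).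
Qed.
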